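(* Let $T$ be an unmixed balanced tree of height 3. Then either $T\cong P_6$, or there exists a sequence of vertices $v_1,\dots,v_k$ such that $T\cong\mathcal{O}(P_6,(v_1,\dots,v_k))$.
   Context: For a graph, a leaf is a vertex of degree 1; the height of a vertex is its minimum distance to a leaf (isolated vertex: height 0); $V_k$ denotes the vertices of height $k$; the height of the graph is the maximum height of its vertices. A tree is balanced if no two adjacent vertices have the same height. With $N(D)=\bigcup_{v\in D}\{u: uv\in E\}$, a TD-set is $D$ with $N(D)=V$, minimal if no proper subset is a TD-set, and the graph is unmixed if all minimal TD-sets have the same size. $P_n$ is the path with vertex set $\{0,1,\dots,n\}$ and edges $\{i-1,i\}$. The operation $\mathcal{O}$: for a tree $T$ and a vertex $v$ of height $1$, $2$ or $3$ in $T$, $\mathcal{O}(T,v)$ is obtained from $T$ by adding a disjoint copy of $P_0$ and joining its vertex $0$ to $v$ if $\mathrm{height}(v)=1$; adding a disjoint copy of $P_3$ and joining its vertex $3$ to $v$ if $\mathrm{height}(v)=2$; adding a disjoint copy of $P_2$ and joining its vertex $2$ to $v$ if $\mathrm{height}(v)=3$. Iteratively, $\mathcal{O}(T,(v_1,\dots,v_n))=\mathcal{O}(\mathcal{O}(T,(v_1,\dots,v_{n-1})),v_n)$, where each $v_j$ is a vertex of height 1, 2 or 3 in $\mathcal{O}(T,(v_1,\dots,v_{j-1}))$ (new vertices relabeled to be distinct). *)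

From mathcomp Require Import all_boot.
Set Implicit Arguments. Unset Strict Implicit. Unset Printing Implicit Defensive.

Section Graphs.
Variable V : finType.
Implicit Types (e : rel V) (A D : {set V}) (v : V).

Definition simple_graph e : Prop := symmetric e /\ irreflexive e.

Definition nbhd e A : {set V} := [set y | [exists x in A, e x y]].

Definition deg e v : nat := #|[set y | e v y]|.
Definition is_leaf e v : bool := deg e v == 1.

Definition ball e (n : nat) v : {set V} :=
  iter n (fun A => A :|: nbhd e A) [set v].

(* height: minimum distance to a leaf; isolated vertex has height 0.
   (Distances are < #|V|; the value is only meaningful when some leaf is
   reachable, which is always the case in a tree with >= 2 vertices.) *)
Definition height e v : nat :=
  if deg e v == 0 then 0
  else find (fun n => [exists u in ball e n v, is_leaf e u]) (iota 0 #|V|).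

Definition graph_height e : nat := \max_(v : V) height e v.

Definition balanced e : Prop :=
  forall u w, e u w -> height e u <> height e w.

Definition connected_graph e : Prop := forall u w, connect e u w.
Definition acyclic e : Prop :=
  forall c : seq V, uniq c -> 3 <= size c -> ~~ cycle e c.
Definition is_tree e : Prop := [/\ simple_graph e, 0 < #|V|, connected_graph e & acyclic e].

Definition TDset e D : Prop := nbhd e D = [set: V].
Definition minimal_TDset e D : Prop :=
  TDset e D /\ forall D', D' \proper D -> ~ TDset e D'.
Definition unmixed e : Prop :=
  forall D1 D2, minimal_TDset e D1 -> minimal_TDset e D2 -> #|D1| = #|D2|.
End Graphs.

Definition isomorphic (V W : finType) (e : rel V) (e' : rel W) : Prop :=
  exists f : V -> W, bijective f /\ forall x y, e x y = e' (f x) (f y).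

(* the path P_n on {0,...,n} : vertex type 'I_(n+1) *)
Definition path_rel (k : nat) : rel 'I_k :=
  fun i j => (i.+1 == j :> nat) || (j.+1 == i :> nat).
Definition P6 : rel 'I_7 := @path_rel 7.

(* add a disjoint copy of P_(k-1) (vertex set 'I_k) and join its vertex a to v *)
Definition attach (V : finType) (e : rel V) (v : V) (k : nat) (a : 'I_k)
  : rel (V + 'I_k) :=
  fun x y => match x, y with
  | inl x, inl y => e x y
  | inr i, inr j => path_rel i j
  | inl x, inr j => (x == v) && (j == a)
  | inr i, inl y => (i == a) && (y == v)
  end.

Definition O1 (V : finType) (e : rel V) (v : V) := attach e v (@Ordinal 1 0 isT).
Definition O2 (V : finType) (e : rel V) (v : V) := attach e v (@Ordinal 4 3 isT).
Definition O3 (V : finType) (e : rel V) (v : V) := attach e v (@Ordinal 3 2 isT).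

(* O_reach V e  <->  e = O(P_6, (v_1,...,v_k)) for some k >= 0 and some
   admissible sequence of vertices v_1,...,v_k. *)
Inductive O_reach : forall V : finType, rel V -> Prop :=
| OR_base : O_reach P6
| OR_h1 (V : finType) (e : rel V) (v : V) :
    O_reach e -> height e v = 1 -> O_reach (O1 e v)
| OR_h2 (V : finType) (e : rel V) (v : V) :
    O_reach e -> height e v = 2 -> O_reach (O2 e v)
| OR_h3 (V : finType) (e : rel V) (v : V) :
    O_reach e -> height e v = 3 -> O_reach (O3 e v).

From mathcomp Require Import all_boot zify.
Set Implicit Arguments. Unset Strict Implicit. Unset Printing Implicit Defensive.

(** In a balanced tree of height 3 heights change by exactly one along every
    edge.  For S ⊆ V_2 dominating V_3, the set V_1 ∪ S together with one leaf
    below each vertex of V_1 outside N(S) is a total dominating set of size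
    |V_1| + |S| + |V_1 \ N(S)|, minimal as soon as every vertex of S has a
    private neighbour.  Comparing two such sets shows that in an unmixed tree
    every vertex of V_1 has exactly one neighbour in V_2, and every vertex of
    V_2 at most one in V_1.  This property survives the removal of the pieces
    that the operation O adds: a second leaf at a vertex of V_1, or a path
    V_0 V_1 V_2 (resp. V_0 V_1 V_2 V_3) hanging from a vertex of V_3 (resp. V_2).
    Walking up from a leaf farthest from a vertex of height 3 exhibits such a
    piece unless the tree is P_6, and induction on the number of vertices
    concludes. *)

(** * Balls, heights and distances *)

Section Balls.
Variables (V : finType) (e : rel V).

Lemma nbhdP (A : {set V}) y : reflect (exists2 x, x \in A & e x y) (y \in nbhd e A).
Proof.
rewrite inE; apply: (iffP existsP) => [[x /andP[]]|[x xA exy]]; first by exists x.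
by exists x; rewrite xA.
Qed.

Lemma nbhdS (A B : {set V}) : A \subset B -> nbhd e A \subset nbhd e B.
Proof.
move=> /subsetP sAB; apply/subsetP => y /nbhdP[x xA exy].
by apply/nbhdP; exists x => //; apply: sAB.
Qed.

Lemma ball0 v : ball e 0 v = [set v]. Proof. by []. Qed.

Lemma ballS n v : ball e n.+1 v = ball e n v :|: nbhd e (ball e n v).
Proof. by rewrite /ball iterS. Qed.

Lemma ball_id n v : v \in ball e n v.
Proof. by elim: n => [|n IH]; rewrite ?ball0 ?set11 // ballS inE IH. Qed.

Lemma ball_trans m n x y : x \in ball e m y -> ball e n x \subset ball e (m + n) y.
Proof.
move=> xy; elim: n => [|n IH]; first by rewrite ball0 addn0 sub1set.
by rewrite ballS addnS ballS setUSS // nbhdS.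
Qed.

Lemma edge_ball1 v u : e v u -> u \in ball e 1 v.
Proof.
by move=> evu; rewrite ballS inE; apply/orP; right; apply/nbhdP; exists v; rewrite ?ball_id.
Qed.

Lemma ballS_inv n v u : u \in ball e n.+1 v ->
  u \in ball e n v \/ exists2 q, e v q & u \in ball e n q.
Proof.
elim: n u => [|n IH] u.
  rewrite ballS inE ball0 => /orP[->|/nbhdP[x]]; first by left.
  by rewrite inE => /eqP -> evu; right; exists u; rewrite ?ball_id.
rewrite ballS inE => /orP[/IH [H|[q evq H]]|/nbhdP[x /IH [H|[q evq H]] exu]].
- by left; rewrite ballS inE H.
- by right; exists q; rewrite // ballS inE H.
- by left; rewrite ballS inE; apply/orP; right; apply/nbhdP; exists x.
- by right; exists q; rewrite // ballS inE; apply/orP; right; apply/nbhdP; exists x.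
Qed.

Lemma connect_ball x y : connect e x y -> exists n, y \in ball e n x.
Proof.
move=> /connectP[p pth ->]; exists (size p); elim: p x pth => [|z p IH] x /=.
  by rewrite set11.
by move=> /andP[/edge_ball1 exz /IH]; apply/subsetP; exact: (ball_trans _ exz).
Qed.

End Balls.

Lemma desc_lt_card (V : finType) (h : V -> nat) :
  (forall v, 0 < h v -> exists u, (h u).+1 = h v) -> forall v, h v < #|V|.
Proof.
move=> desc v.
have img n w : h w = n -> forall k, k <= n -> k \in [seq h x | x <- enum V].
  elim: n w => [|n IH] w hw k; first by rewrite leqn0 => /eqP ->; rewrite -hw map_f ?mem_enum.
  rewrite leq_eqVlt => /orP[/eqP ->|]; first by rewrite -hw map_f ?mem_enum.
  have [u hu] : exists u, (h u).+1 = h w by apply: desc; rewrite hw.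
  by rewrite ltnS; apply: (IH u); apply/eqP; rewrite -eqSS hu hw.
have := uniq_leq_size (iota_uniq 0 (h v).+1) (s2 := [seq h x | x <- enum V]).
rewrite size_iota size_map -cardE; apply=> k; rewrite mem_iota leq0n add0n ltnS.
exact: img.
Qed.

Lemma find_iota_least (P : pred nat) N n :
  n < N -> P n -> (forall m, m < n -> ~~ P m) -> find P (iota 0 N) = n.
Proof.
move=> nN Pn Pmin; have hasP : has P (iota 0 N) by apply/hasP; exists n; rewrite ?mem_iota.
have := nth_find 0 hasP; rewrite has_find size_iota in hasP.
rewrite nth_iota // add0n => Pf.
case: (ltngtP (find P (iota 0 N)) n) => // lt; first by rewrite (negbTE (Pmin _ lt)) in Pf.
by move: (before_find 0 lt); rewrite nth_iota // add0n Pn.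
Qed.

Section Height.
Variables (V : finType) (e : rel V).

Lemma height_char (h : V -> nat) :
  (forall v, exists u, e v u) ->
  (forall v, h v = 0 <-> is_leaf e v) ->
  (forall v, 0 < h v -> exists u, e v u /\ (h u).+1 = h v) ->
  (forall u v, e u v -> h u <= (h v).+1) ->
  forall v, height e v = h v.
Proof.
move=> nbr hleaf desc lip v.
have deg_v : deg e v != 0.
  by have [u evu] := nbr v; rewrite /deg cards_eq0; apply/set0Pn; exists u; rewrite inE.
have leaf_near n w : h w = n -> exists2 u, u \in ball e n w & h u = 0.
  elim: n w => [|n IH] w hw; first by exists w; rewrite ?ball_id.
  have [q [ewq hq]] : exists q, e w q /\ (h q).+1 = h w by apply: desc; rewrite hw.
  have [u uq hu] := IH q (succn_inj (etrans hq hw)).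
  by exists u => //; apply: subsetP (ball_trans n (edge_ball1 ewq)) _ uq.
have ball_h n w : w \in ball e n v -> h v <= h w + n.
  elim: n w => [|n IH] w; first by rewrite ball0 inE => /eqP ->; rewrite addn0.
  rewrite ballS inE => /orP[/IH|/nbhdP[x /IH hx exw]]; first lia.
  by have := lip x w exw; lia.
rewrite /height (negbTE deg_v); apply: find_iota_least.
- apply: desc_lt_card => w /desc[u [_ hu]]; by exists u.
- have [u uv hu] := leaf_near _ v erefl.
  by apply/existsP; exists u; rewrite uv; apply/hleaf.
- move=> m lt_m_hv; apply/existsP => [[u /andP[uv /hleaf hu]]].
  by have := ball_h _ _ uv; lia.
Qed.

Lemma leaf_height0 v : is_leaf e v -> height e v = 0.
Proof.
move=> lv; rewrite /height; case: ifP => // _.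
have : 0 < #|V| by apply/card_gt0P; exists v.
case: #|V| => // n _ /=.
by have -> : [exists u in ball e 0 v, is_leaf e u] by apply/existsP; exists v; rewrite ball0 set11.
Qed.

Lemma height_iso (W : finType) (e' : rel W) (f : V -> W) : bijective f ->
  (forall x y, e x y = e' (f x) (f y)) -> forall v, height e v = height e' (f v).
Proof.
move=> bf fE; have [g fK gK] := bf.
have nbr1 x : [set y | e' (f x) y] = f @: [set y | e x y].
  apply/setP => y; rewrite inE; apply/idP/imsetP => [exy|[z]].
    by exists (g y); rewrite ?inE ?fE gK.
  by rewrite inE => exz ->; rewrite -fE.
have deg_f x : deg e' (f x) = deg e x by rewrite /deg nbr1 card_imset //; apply: bij_inj.
have leaf_f x : is_leaf e' (f x) = is_leaf e x by rewrite /is_leaf deg_f.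
have nbhd_f (A : {set V}) : nbhd e' (f @: A) = f @: nbhd e A.
  apply/setP => y; apply/nbhdP/imsetP => [[x /imsetP[z zA ->] ezy]|[z /nbhdP[x xA exz] ->]].
    by exists (g y); [apply/nbhdP; exists z; rewrite // fE gK|rewrite gK].
  by exists (f x); [apply: imset_f|rewrite -fE].
have ball_f n v : ball e' n (f v) = f @: ball e n v.
  by elim: n => [|n IH]; rewrite ?imset_set1 // !ballS IH imsetU nbhd_f.
move=> v; rewrite /height deg_f (bij_eq_card bf); case: ifP => // _.
apply: eq_find => n /=; rewrite ball_f.
apply/existsP/existsP => [[u /andP[ub lu]]|[y /andP[]]].
  by exists (f u); rewrite imset_f // leaf_f.
by case/imsetP=> u ub ->; rewrite leaf_f => lu; exists u; rewrite ub.
Qed.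

End Height.

Definition avoid (V : finType) (e : rel V) (u : V) : rel V :=
  fun i j => [&& e i j, i != u & j != u].

Lemma connected_closed (V : finType) (e : rel V) (K : {set V}) x :
  connected_graph e -> x \in K -> (forall u v, u \in K -> e u v -> v \in K) -> K = [set: V].
Proof.
move=> conn xK closedK; apply/setP => v; rewrite inE.
have /connectP[p pth ->] := conn x v.
by elim: p x xK pth => [|z p IH] x xK //= /andP[exz]; apply: IH; apply: closedK exz.
Qed.

Section Tree.
Variables (V : finType) (e : rel V).
Hypotheses (e_sym : symmetric e) (e_irr : irreflexive e) (e_acyc : acyclic e).

Lemma avoid_sym u : symmetric (avoid e u).
Proof. by move=> i j; rewrite /avoid e_sym [(i != u) && _]andbC. Qed.

Lemma edge_neq u v : e u v -> u != v.
Proof. by apply: contraTneq => ->; rewrite e_irr. Qed.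

Lemma path_avoid_notin u p s : path (avoid e u) p s -> u \notin s.
Proof.
elim: s p => [|z s IH] p //= /andP[/and3P[_ _ zu] /IH].
by rewrite inE negb_or eq_sym zu.
Qed.

Lemma avoid_disconnected u p q : e u p -> e u q -> p != q -> ~~ connect (avoid e u) p q.
Proof.
move=> eup euq pq; apply/negP => /connectP[s pth].
case: (shortenP pth) => s' pth' uniq_s' _ qE.
have u_notin : u \notin p :: s'.
  by rewrite inE negb_or edge_neq //= (path_avoid_notin pth').
have size_c : 3 <= size (u :: p :: s').
  by case: s' {pth' uniq_s' u_notin} qE => [/= qp|]; [rewrite qp eqxx in pq|].
have := e_acyc (c := u :: p :: s'); rewrite cons_uniq u_notin uniq_s' size_c => /(_ isT isT).
apply/negP; apply/negPn; rewrite /= eup rcons_path -qE e_sym euq andbT.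
by apply: sub_path pth' => i j /and3P[].
Qed.

Section Distance.
Variable r : V.
Hypothesis conn : forall u, connect e r u.

Definition dist u := ex_minn (connect_ball (conn u)).

Lemma dist_ball u : u \in ball e (dist u) r.
Proof. by rewrite /dist; case: ex_minnP. Qed.

Lemma dist_min u n : u \in ball e n r -> dist u <= n.
Proof. by rewrite /dist; case: ex_minnP => m _ min_m /min_m. Qed.

Lemma dist_root : dist r = 0.
Proof. by apply/eqP; rewrite -leqn0; apply: dist_min; rewrite ball0 set11. Qed.

Lemma dist_eq0 u : dist u = 0 -> u = r.
Proof. by move=> d0; have := dist_ball u; rewrite d0 ball0 inE => /eqP. Qed.

Lemma dist_edge_le u v : e u v -> dist v <= (dist u).+1.
Proof.
move=> euv; apply: dist_min; rewrite -addn1.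
by apply: subsetP (ball_trans 1 (dist_ball u)) _ (edge_ball1 euv).
Qed.

Lemma exists_parent u : u != r -> exists q, e u q /\ (dist q).+1 = dist u.
Proof.
move=> ur; case du: (dist u) => [|n]; first by rewrite (dist_eq0 du) eqxx in ur.
have := dist_ball u; rewrite du ballS inE => /orP[/dist_min|/nbhdP[q qb equ]]; first lia.
by exists q; rewrite e_sym; split=> //; have := dist_min qb; have := dist_edge_le equ; lia.
Qed.

Lemma connect_avoid_root u q : dist q < dist u -> connect (avoid e u) q r.
Proof.
move: {2}(dist q) (leqnn (dist q)) => n; elim: n q => [|n IH] q dq lt_qu.
  by move: dq; rewrite leqn0 => /eqP/dist_eq0 ->; apply: connect0.
case: (eqVneq q r) => [->|qr]; first exact: connect0.
have [p [eqp dp]] := exists_parent qr.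
apply: connect_trans (connect1 _) (IH p _ _); try lia.
by rewrite /avoid eqp /=; apply/andP; split; apply/eqP => E; move: lt_qu dp; rewrite E; lia.
Qed.

Lemma parent_uniq v q1 q2 : e v q1 -> e v q2 ->
  (dist q1).+1 = dist v -> (dist q2).+1 = dist v -> q1 = q2.
Proof.
move=> evq1 evq2 d1 d2; apply/eqP/negPn/negP => /(avoid_disconnected evq1 evq2)/negP; apply.
apply: (connect_trans (connect_avoid_root (u := v) _)); first lia.
by rewrite (sym_connect_sym (@avoid_sym v)); apply: connect_avoid_root; lia.
Qed.

Lemma dist_edge u v : e u v -> dist v = (dist u).+1 \/ dist u = (dist v).+1.
Proof.
move=> euv; have := dist_edge_le euv; have := dist_edge_le (v := u) (u := v).
rewrite e_sym => /(_ euv); suff : dist u != dist v by lia.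
apply/eqP => duv; case: (eqVneq u r) => [ur|ur].
  by rewrite ur dist_root in duv; rewrite ur (dist_eq0 (esym duv)) e_irr in euv.
have vr : v != r by apply: contra_neq ur => vr; apply: dist_eq0; rewrite duv vr dist_root.
have [pu [eupu dpu]] := exists_parent ur; have [pv [evpv dpv]] := exists_parent vr.
have pu_v : pu != v by apply/eqP => puv; move: dpu; rewrite puv; lia.
case/negP: (avoid_disconnected eupu euv pu_v).
apply: (connect_trans (connect_avoid_root (u := u) _)); first lia.
rewrite (sym_connect_sym (@avoid_sym u)).
apply: connect_trans (connect1 _) (connect_avoid_root (q := pv) _); last lia.
rewrite /avoid evpv eq_sym edge_neq //=.
by apply/eqP => pvu; move: dpv; rewrite pvu; lia.
Qed.

Lemma dist_child v p c : e v p -> (dist p).+1 = dist v -> e v c -> c != p ->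
  dist c = (dist v).+1.
Proof.
move=> evp dp evc cp; case: (dist_edge evc) => // dvc.
by rewrite (parent_uniq evc evp (esym dvc) dp) eqxx in cp.
Qed.

Lemma exists_farthest : (exists q, e r q) -> exists2 m, m != r & forall y, dist y <= dist m.
Proof.
move=> [q erq]; exists [arg max_(i > r) dist i]; case: arg_maxnP => // m _ m_max.
  apply: contraTneq (m_max q isT) => ->; rewrite dist_root -ltnNge lt0n.
  by apply: contraTneq erq => /dist_eq0 ->; rewrite e_irr.
by move=> y; apply: m_max.
Qed.

Lemma farthest_leaf m : m != r -> (forall y, dist y <= dist m) -> is_leaf e m.
Proof.
move=> mr m_max; have [p [emp dp]] := exists_parent mr.
rewrite /is_leaf /deg (_ : [set y | e m y] = [set p]) ?cards1 //.
apply/setP => y; rewrite !inE; apply/idP/eqP => [emy|->//].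
by apply: (parent_uniq emy emp) => //; have := m_max y; case: (dist_edge emy); lia.
Qed.

End Distance.
End Tree.

Section LeafDistance.
Variables (V : finType) (e : rel V).
Hypothesis conn : connected_graph e.
Hypotheses (has_nbr : forall v, exists u, e v u) (has_leaf : exists l, is_leaf e l).

Let leaf_near u : exists n, [exists y in ball e n u, is_leaf e y].
Proof.
have [l ll] := has_leaf; have [n ln] := connect_ball (conn u l).
by exists n; apply/existsP; exists l; rewrite ln ll.
Qed.

Let leaf_dist u := ex_minn (leaf_near u).

Let leaf_dist_ball u : [exists y in ball e (leaf_dist u) u, is_leaf e y].
Proof. by rewrite /leaf_dist; case: ex_minnP. Qed.

Let leaf_dist_min u n : [exists y in ball e n u, is_leaf e y] -> leaf_dist u <= n.
Proof. by rewrite /leaf_dist; case: ex_minnP => m _ min_m /min_m. Qed.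

Let leaf_dist_edge u v : e u v -> leaf_dist u <= (leaf_dist v).+1.
Proof.
move=> euv; apply: leaf_dist_min; have /existsP[y /andP[yb ly]] := leaf_dist_ball v.
apply/existsP; exists y; rewrite ly andbT.
by apply: subsetP (ball_trans _ (edge_ball1 euv)) _ yb.
Qed.

Let leaf_dist_desc v : 0 < leaf_dist v -> exists u, e v u /\ (leaf_dist u).+1 = leaf_dist v.
Proof.
case dv: (leaf_dist v) => [|n] // _.
have /existsP[y /andP[yb ly]] := leaf_dist_ball v; rewrite dv in yb.
have near_y w : y \in ball e n w -> leaf_dist w <= n.
  by move=> yw; apply: leaf_dist_min; apply/existsP; exists y; rewrite yw ly.
case: (ballS_inv yb) => [/near_y|[u evu /near_y]]; first lia.
by exists u; split=> //; have := leaf_dist_edge evu; lia.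
Qed.

Let leaf_dist0 v : leaf_dist v = 0 <-> is_leaf e v.
Proof.
split=> [dv|lv]; last first.
  by apply/eqP; rewrite -leqn0; apply: leaf_dist_min; apply/existsP; exists v; rewrite ball_id.
by have /existsP[y /andP] := leaf_dist_ball v; rewrite dv ball0 inE => -[/eqP ->].
Qed.

Let height_leaf_dist : height e =1 leaf_dist.
Proof. exact: height_char has_nbr leaf_dist0 leaf_dist_desc leaf_dist_edge. Qed.

Lemma height0_leaf v : height e v = 0 -> is_leaf e v.
Proof. by rewrite height_leaf_dist => /leaf_dist0. Qed.

Lemma height_desc v : 0 < height e v -> exists u, e v u /\ (height e u).+1 = height e v.
Proof. by rewrite !height_leaf_dist => /leaf_dist_desc[u]; exists u; rewrite height_leaf_dist. Qed.

Lemma height_edge_le u v : e u v -> height e u <= (height e v).+1.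
Proof. by rewrite !height_leaf_dist; apply: leaf_dist_edge. Qed.

End LeafDistance.

(** * Balanced trees of height 3 *)

Record balanced_tree3 (V : finType) (e : rel V) : Prop := BalancedTree3 {
  bt_sym : symmetric e;
  bt_irr : irreflexive e;
  bt_acyc : acyclic e;
  bt_conn : connected_graph e;
  bt_le3 : forall v, height e v <= 3;
  bt_edge : forall u v, e u v -> height e u = (height e v).+1 \/ height e v = (height e u).+1;
  bt_leaf : forall v, height e v = 0 -> is_leaf e v;
  bt_desc : forall v, 0 < height e v -> exists u, e v u /\ (height e u).+1 = height e v;
  bt_ex3 : exists v, height e v = 3 }.

Lemma balanced_tree3_of (V : finType) (e : rel V) :
  is_tree e -> balanced e -> graph_height e = 3 -> balanced_tree3 e.
Proof.
move=> [[e_sym e_irr] V0 conn acyc] bal gh.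
have le3 v : height e v <= 3 by rewrite -gh; apply: leq_bigmax.
have [v3 hv3] : exists v, height e v = 3.
  by have [v hv] := eq_bigmax (fun v => height e v) V0; exists v; rewrite -hv.
have [q ev3q] : exists q, e v3 q.
  move: hv3; rewrite /height; case: ifP => // /negbT; rewrite /deg cards_eq0.
  by case/set0Pn=> q; rewrite inE; exists q.
have conn3 u : connect e v3 u by apply: conn.
have [l lv3 l_max] := exists_farthest e_irr conn3 (ex_intro _ q ev3q).
have ll := farthest_leaf e_sym e_irr acyc lv3 l_max.
have has_nbr u : exists w, e u w.
  case: (eqVneq u v3) => [->|uv3]; first by exists q.
  have /connectP[[|w p] /= euw uE] := conn u v3; first by rewrite uE eqxx in uv3.
  by exists w; case/andP: euw.
have leaf_ex : exists l, is_leaf e l by exists l.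
split=> //.
- move=> u v euv; have := height_edge_le conn has_nbr leaf_ex euv.
  rewrite e_sym in euv; have := height_edge_le conn has_nbr leaf_ex euv.
  by have := bal v u euv; lia.
- exact: height0_leaf.
- exact: height_desc.
- by exists v3.
Qed.

Lemma minimal_TDset_sub (V : finType) (e : rel V) (D : {set V}) :
  TDset e D -> exists2 D' : {set V}, D' \subset D & minimal_TDset e D'.
Proof.
move=> /eqP TD.
have [D' /minsetP[/eqP TD' minD'] sD'D] := minset_exists (P := fun B => nbhd e B == [set: V]) TD.
exists D' => //; split=> // D'' /[dup] /proper_sub sD''D' + /eqP/minD'/(_ sD''D') D''E.
by rewrite D''E properxx.
Qed.

Lemma leaf_nbr_uniq (V : finType) (e : rel V) l x y : is_leaf e l -> e l x -> e l y -> x = y.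
Proof.
rewrite /is_leaf /deg => /cards1P[z lE] elx ely.
have : x \in [set y | e l y] by rewrite inE.
have : y \in [set y | e l y] by rewrite inE.
by rewrite lE !inE => /eqP -> /eqP ->.
Qed.

Section BalancedTree3.
Variables (V : finType) (e : rel V).
Hypothesis B : balanced_tree3 e.
Local Notation h := (height e).
Let e_sym := bt_sym B.
Let e_irr := bt_irr B.
Let e_acyc := bt_acyc B.

Lemma leafE v : is_leaf e v = (h v == 0).
Proof. by apply/idP/eqP => [/leaf_height0|/(bt_leaf B)]. Qed.

Lemma exists_nbr v : exists u, e v u.
Proof.
case hv: (h v) => [|n]; last by have [|u [evu _]] := bt_desc B (v := v); [rewrite hv|exists u].
have /cards1P[u vE] : is_leaf e v by rewrite leafE hv.
by exists u; have := set11 u; rewrite -vE inE.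
Qed.

Lemma other_nbr v a : 0 < h v -> e v a -> exists2 b, e v b & b != a.
Proof.
move=> hv eva; case: (pickP [pred b | e v b & b != a]) => [b /andP[]|none]; first by exists b.
suff : is_leaf e v by rewrite leafE => /eqP hv0; rewrite hv0 in hv.
apply/cards1P; exists a; apply/setP => b; rewrite !inE.
by apply/idP/eqP => [evb|->//]; apply/eqP; have := none b; rewrite /= evb => /negbFE.
Qed.

Lemma height_nbr3 u t : h u = 3 -> e u t -> h t = 2.
Proof. by move=> hu eut; have := bt_le3 B t; case: (bt_edge B eut); lia. Qed.

Lemma height1_nbr2 v : h v = 1 -> exists u, e v u /\ h u = 2.
Proof.
move=> hv; case: (pickP [pred u | e v u & h u == 2]) => [u /andP[evu /eqP]|none].
  by exists u.
have nbr0 u : e v u -> h u = 0.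
  by move=> evu; have := none u; rewrite /= evu; case: (bt_edge B evu); lia.
have closedK u w : u \in v |: [set y | e v y] -> e u w -> w \in v |: [set y | e v y].
  rewrite !inE => /orP[/eqP ->|evu] euw; first by rewrite euw orbT.
  have lu : is_leaf e u by rewrite leafE nbr0.
  by rewrite (leaf_nbr_uniq lu euw (_ : e u v)) ?eqxx // e_sym.
have [v3 h3] := bt_ex3 B; have := in_setT v3.
rewrite -(connected_closed (bt_conn B) (setU11 v _) closedK) !inE.
by case/orP=> [/eqP v3v|/nbr0]; [rewrite v3v hv in h3|rewrite h3].
Qed.

(** * Total dominating sets built from V_2 *)

Definition level n := [set v | h v == n].

Definition pendant_leaf q := odflt q [pick l | e q l && (h l == 0)].

Lemma pendant_leafP q : h q = 1 -> e q (pendant_leaf q) /\ h (pendant_leaf q) = 0.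
Proof.
move=> hq; have [|u [equ hu]] := bt_desc B (v := q); first by rewrite hq.
have hu0 : h u = 0 by rewrite hq in hu; case: hu.
rewrite /pendant_leaf; case: pickP => [l /andP[eql /eqP hl]|none] //=.
by have := none u; rewrite equ hu0 eqxx.
Qed.

Lemma pendant_leaf_is_leaf q : h q = 1 -> is_leaf e (pendant_leaf q).
Proof. by move=> /pendant_leafP[_ hl]; rewrite leafE hl. Qed.

Lemma pendant_leaf_inj : {in level 1 &, injective pendant_leaf}.
Proof.
move=> q1 q2; rewrite !inE => /eqP h1 /eqP h2 E.
have [e1 _] := pendant_leafP h1; have [e2 _] := pendant_leafP h2.
by apply: (leaf_nbr_uniq (pendant_leaf_is_leaf h1)); rewrite e_sym // E.
Qed.

(* V_1 dominates V_0 and V_2, S is meant to dominate V_3, and each vertex of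
   V_1 not adjacent to S is dominated by one of its leaves. *)
Definition tdset_of (S : {set V}) := level 1 :|: S :|: pendant_leaf @: (level 1 :\: nbhd e S).

Definition dom3 (S : {set V}) := [forall u, (h u == 3) ==> [exists s in S, e s u]].

Lemma dom3P (S : {set V}) : reflect (forall u, h u = 3 -> exists2 s, s \in S & e s u) (dom3 S).
Proof.
apply: (iffP forallP) => [dS u /eqP hu|dS u].
  by have /implyP/(_ hu)/existsP[s /andP[]] := dS u; exists s.
by apply/implyP => /eqP/dS[s sS esu]; apply/existsP; exists s; rewrite sS.
Qed.

Definition has_privates (S : {set V}) := forall s, s \in S ->
  exists u, [/\ e s u, h u = 1 \/ h u = 3 & forall s', s' \in S -> e s' u -> s' = s].

Definition td_cost (S : {set V}) := #|S| + #|level 1 :\: nbhd e S|.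

Lemma tdset_of_TD (S : {set V}) : dom3 S -> TDset e (tdset_of S).
Proof.
move=> /dom3P dS; apply/setP => u; rewrite in_setT; apply/nbhdP.
have := bt_le3 B u; case hu: (h u) => [|[|[|[|n]]]] // _.
- have [w euw] := exists_nbr u; exists w; last by rewrite e_sym.
  by rewrite !inE; case: (bt_edge B euw); rewrite hu => // ->.
- case: (boolP (u \in nbhd e S)) => [/nbhdP[s sS esu]|uNS].
    by exists s; rewrite // !inE sS orbT.
  have [eul _] := pendant_leafP hu; exists (pendant_leaf u); last by rewrite e_sym.
  by rewrite in_setU imset_f ?orbT // in_setD uNS inE hu.
- have [|w [euw hw]] := bt_desc B (v := u); first by rewrite hu.
  exists w; last by rewrite e_sym.
  by rewrite !inE; move: hw; rewrite hu => -[->].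
- by have [s sS esu] := dS u hu; exists s; rewrite // !inE sS orbT.
Qed.

Lemma card_tdset_of_le (S : {set V}) : #|tdset_of S| <= #|level 1| + td_cost S.
Proof.
rewrite /tdset_of /td_cost; have := leq_imset_card pendant_leaf (level 1 :\: nbhd e S).
have := cardsU (level 1 :|: S) (pendant_leaf @: (level 1 :\: nbhd e S)).
by have := cardsU (level 1) S; lia.
Qed.

Lemma card_tdset_of (S : {set V}) : S \subset level 2 -> #|tdset_of S| = #|level 1| + td_cost S.
Proof.
move=> /subsetP S2.
have disj1 : [disjoint level 1 & S].
  rewrite disjoints_subset; apply/subsetP => x; rewrite !inE => /eqP hx.
  by apply/negP => /S2; rewrite inE hx.
have disj2 : [disjoint level 1 :|: S & pendant_leaf @: (level 1 :\: nbhd e S)].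
  rewrite disjoint_sym disjoints_subset; apply/subsetP => _ /imsetP[q /setDP[+ _] ->].
  rewrite inE => /eqP hq; have [_ hl] := pendant_leafP hq.
  by rewrite !inE hl /=; apply/negP => /S2; rewrite inE hl.
rewrite /tdset_of /td_cost !cardsU (disjoint_setI0 disj1) (disjoint_setI0 disj2).
rewrite !cards0 !subn0 card_in_imset ?addnA //.
by move=> q1 q2 /setDP[q1L _] /setDP[q2L _]; apply: pendant_leaf_inj.
Qed.

Lemma tdset_of_private (S : {set V}) : S \subset level 2 -> has_privates S ->
  forall v, v \in tdset_of S -> exists u, forall t, t \in tdset_of S -> e t u -> t = v.
Proof.
have pendant_nbr q l : h q = 1 -> e l (pendant_leaf q) -> l = q.
  move=> hq elq; have [eql _] := pendant_leafP hq.
  by apply: (leaf_nbr_uniq (pendant_leaf_is_leaf hq)); rewrite e_sym.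
have levelN1 q : q \in level 1 :\: nbhd e S -> q \notin nbhd e S /\ h q = 1.
  by case/setDP; rewrite inE => /eqP.
move=> /subsetP S2 privS v; rewrite !inE => /orP[/orP[/eqP hv|vS]|/imsetP[q /levelN1[qNS hq] ->]].
- exists (pendant_leaf v) => t _ etl.
  by apply: pendant_nbr.
- have [u [evu hu privu]] := privS v vS; exists u => t + etu.
  rewrite !inE => /orP[/orP[/eqP ht|tS]|/imsetP[q /levelN1[qNS hq] tE]].
  + by case: (bt_edge B etu); lia.
  + exact: privu.
  + rewrite tE e_sym in etu; case/negP: qNS; rewrite -(pendant_nbr _ _ hq etu).
    by apply/nbhdP; exists v.
- exists q => t + etq; rewrite !inE => /orP[/orP[/eqP ht|tS]|/imsetP[q' /levelN1[_ hq'] tE]].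
  + by case: (bt_edge B etq); lia.
  + by case/negP: qNS; apply/nbhdP; exists t.
  + by rewrite tE e_sym in etq *; rewrite (pendant_nbr _ _ hq' etq).
Qed.

Lemma tdset_of_minimal (S : {set V}) : S \subset level 2 -> dom3 S -> has_privates S ->
  minimal_TDset e (tdset_of S).
Proof.
move=> S2 dS privS; split; first exact: tdset_of_TD.
move=> D /properP[sDS [v vS vD]] TD.
have [u u_priv] := tdset_of_private S2 privS vS.
have : u \in nbhd e D by rewrite TD inE.
case/nbhdP=> t tD etu; have tS := subsetP sDS t tD.
by move: vD; rewrite -(u_priv t tS etu) tD.
Qed.

Lemma minset_dom3_privates (S : {set V}) : minset dom3 S -> has_privates S.
Proof.
move=> /minsetP[dS minS] s sS.
have : ~~ dom3 (S :\ s).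
  by apply/negP => /minS/(_ (subsetDl _ _)) SsE; have := setD11 s S; rewrite SsE sS.
case/forallPn=> u; rewrite negb_imply => /andP[/eqP hu /existsPn no_s'].
have privu s' : s' \in S -> e s' u -> s' = s.
  by move=> s'S es'u; apply/eqP; have := no_s' s'; rewrite !inE s'S es'u !andbT negbK.
have [s'' s''S es''u] := elimT (dom3P S) dS u hu.
by exists u; split; [rewrite -(privu _ s''S es''u)|right|].
Qed.

Lemma avoid_height u i j : e i j -> h i != h u -> h j != h u -> avoid e u i j.
Proof.
move=> eij hi hj; rewrite /avoid eij /=; apply/andP.
by split; apply/eqP => E; [move: hi|move: hj]; rewrite E eqxx.
Qed.

Lemma dom3S (S S' : {set V}) : S \subset S' -> dom3 S -> dom3 S'.
Proof.
move=> sSS' /dom3P dS; apply/dom3P => u /dS[s sS esu].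
by exists s; rewrite ?(subsetP sSS').
Qed.

Lemma dom3_nonadjacent x a b : h x = 2 -> e x a -> e x b -> h a = 1 -> h b = 1 ->
  dom3 [set s | [&& h s == 2, ~~ e s a & ~~ e s b]].
Proof.
move=> hx exa exb ha hb; set W := [set s | _].
have near_x t : h t = 2 -> t \notin W -> exists2 c, e t c & e c x /\ h c = 1.
  move=> ht; rewrite inE ht eqxx /= negb_and !negbK.
  by case/orP=> [eta|etb]; [exists a; rewrite // e_sym|exists b; rewrite // e_sym].
apply/dom3P => u hu; have [|p [eup hp]] := bt_desc B (v := u); first by rewrite hu.
have [|q euq qp] := other_nbr (v := u) _ eup; first by rewrite hu.
have {}hp : h p = 2 by rewrite hu in hp; case: hp.
have hq := height_nbr3 hu euq.
case: (boolP (p \in W)) => pW; first by exists p; rewrite // e_sym.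
case: (boolP (q \in W)) => qW; first by exists q; rewrite // e_sym.
(* Otherwise p and q would be joined by the walk p - a|b - x - a|b - q avoiding u. *)
have av i j : e i j -> h i != 3 -> h j != 3 -> avoid e u i j.
  by rewrite -hu; apply: avoid_height.
have pq : p != q by rewrite eq_sym.
case/negP: (avoid_disconnected e_sym e_irr e_acyc eup euq pq).
have [cp epc [ecpx hcp]] := near_x p hp pW; have [cq eqc [ecqx hcq]] := near_x q hq qW.
have excq : e x cq by rewrite e_sym.
have ecqq : e cq q by rewrite e_sym.
apply/connectP; exists [:: cp; x; cq; q] => //=.
by rewrite !av ?hp ?hq ?hx ?hcp ?hcq.
Qed.

Section Unmixed.
Hypothesis um : unmixed e.

Lemma unmixed_td_cost_min (S S' : {set V}) :
  S \subset level 2 -> dom3 S -> has_privates S -> dom3 S' -> td_cost S <= td_cost S'.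
Proof.
move=> S2 dS privS dS'.
have [D sD minD] := minimal_TDset_sub (tdset_of_TD dS').
have := um (tdset_of_minimal S2 dS privS) minD.
have := subset_leq_card sD; have := card_tdset_of S2; have := card_tdset_of_le S'; lia.
Qed.

Lemma level2_nbr1_uniq x a b : h x = 2 -> e x a -> e x b -> h a = 1 -> h b = 1 -> a = b.
Proof.
move=> hx exa exb ha hb; apply/eqP/negPn/negP => ab.
pose W := [set s | [&& h s == 2, ~~ e s a & ~~ e s b]].
have [S minS sSW] := minset_exists (dom3_nonadjacent hx exa exb ha hb : dom3 W).
have dS := minsetp minS.
have S_W s : s \in S -> ~~ e s a && ~~ e s b.
  by move/(subsetP sSW); rewrite inE => /and3P[_ -> ->].
have S2 : S \subset level 2.
  by apply/(subset_trans sSW)/subsetP => s; rewrite !inE => /and3P[].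
have xS : x \notin S by apply: contraTN exa => /S_W/andP[/negbTE ->].
(* Adding x to S covers a and b, which lowers td_cost. *)
have uncovered c : c = a \/ c = b -> c \in level 1 :\: nbhd e S.
  move=> cab; rewrite in_setD; apply/andP; split.
    apply/negP => /nbhdP[s /S_W/andP[nsa nsb] esc].
    by case: cab => cE; rewrite cE in esc; [rewrite esc in nsa|rewrite esc in nsb].
  by rewrite inE; case: cab => ->; rewrite ?ha ?hb.
have aN := uncovered a (or_introl erefl).
have bN : b \in (level 1 :\: nbhd e S) :\ a by rewrite in_setD1 (eq_sym b a) ab uncovered //; right.
have sub : level 1 :\: nbhd e (x |: S) \subset ((level 1 :\: nbhd e S) :\ a) :\ b.
  apply/subsetP => q; rewrite in_setD => /andP[qN q1].
  have qNS : q \notin nbhd e S by apply: contra qN; apply/subsetP/nbhdS/subsetU1.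
  have xq c : e x c -> q != c.
    by move=> exc; apply: contraNneq qN => ->; apply/nbhdP; exists x; rewrite ?setU11.
  by rewrite !in_setD1 in_setD qNS q1 xq // xq.
have lt_cost : td_cost (x |: S) < td_cost S.
  rewrite /td_cost cardsU1 xS (cardsD1 a (level 1 :\: nbhd e S)) aN (cardsD1 b (_ :\ a)) bN.
  by rewrite !add1n addSn !addnS !ltnS leq_add2l subset_leq_card.
have := unmixed_td_cost_min S2 dS (minset_dom3_privates minS) (dom3S (subsetU1 x S) dS).
by rewrite leqNgt lt_cost.
Qed.

(* Two neighbours x, y in V_2 of a in V_1 are impossible.  Root the tree at a,
   and let z, z' be children in V_3 of x, y, w a child of z and b a child in V_1
   of w.  The set S of x, y and of all vertices of V_2 whose parent lies in
   V_3 \ {z, z'} dominates V_3 and has private neighbours; trading x for w keeps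
   V_3 dominated and a covered (by y), and covers b, so td_cost decreases. *)
Section Level1Matched.
Variables (a x y z z' w b : V).
Let conn u : connect e a u := bt_conn B a u.
Local Notation d := (dist conn).
Hypotheses (ha : h a = 1) (hz : h z = 3) (hz' : h z' = 3) (hb : h b = 1).
Hypotheses (eax : e a x) (eay : e a y) (exz : e x z) (eyz' : e y z') (ezw : e z w) (ewb : e w b).
Hypothesis xy : x != y.
Hypotheses (dx : d x = 1) (dy : d y = 1) (dz : d z = 2) (dz' : d z' = 2).
Hypotheses (dw : d w = 3) (db : d b = 4).

Let parent_uniq_a := parent_uniq e_sym e_irr e_acyc (conn := conn).
Let dist_edge_a := dist_edge e_sym e_irr e_acyc conn.
Let dist_child_a := dist_child e_sym e_irr e_acyc (conn := conn).

Let hx : h x = 2. Proof. by apply: height_nbr3 hz _; rewrite e_sym. Qed.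
Let hy : h y = 2. Proof. by apply: height_nbr3 hz' _; rewrite e_sym. Qed.

Let S1 := [set s | (h s == 2) &&
  [exists u, [&& e s u, h u == 3, (d u).+1 == d s, u != z & u != z']]].

Let S1P s : s \in S1 ->
  h s = 2 /\ exists u, [/\ e s u, h u = 3, (d u).+1 = d s, u != z & u != z'].
Proof.
rewrite inE => /andP[/eqP hs /existsP[u /and5P[esu /eqP hu /eqP du uz uz']]].
by split=> //; exists u.
Qed.

Let S1_dist s : s \in S1 -> 2 <= d s.
Proof.
case/S1P=> _ [u [_ hu du _ _]]; rewrite -du ltnS lt0n.
by apply/eqP => /(dist_eq0 (conn := conn)) ua; move: hu; rewrite ua ha.
Qed.

Let S1_child s c : s \in S1 -> e s c -> h c != 3 -> d c = (d s).+1.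
Proof.
case/S1P=> _ [u [esu hu du _ _]] esc hc.
by apply: dist_child_a esu du esc _; apply: contraNneq hc => ->; rewrite hu.
Qed.

Let S1_not_z s t : s \in S1 -> e s t -> t = z \/ t = z' -> False.
Proof.
move=> sS1 est tz; have [_ [u [esu hu du uz uz']]] := S1P sS1.
case: (dist_edge_a est) => dt.
  by case: tz => tE; move: dt; rewrite tE ?dz ?dz' => -[ds]; move: (S1_dist sS1); rewrite -ds.
have ut := parent_uniq_a esu est du (esym dt).
by case: tz => tE; [rewrite ut tE eqxx in uz|rewrite ut tE eqxx in uz'].
Qed.

Let S1_dom u : h u = 3 -> u != z -> u != z' -> exists2 s, s \in S1 & e s u.
Proof.
move=> hu uz uz'.
have ua : u != a by apply/eqP => ua; move: hu; rewrite ua ha.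
have [pu [eupu dpu]] := exists_parent e_sym conn ua.
have [|c euc cpu] := other_nbr (v := u) _ eupu; first by rewrite hu.
have dc := dist_child_a eupu dpu euc cpu.
exists c; last by rewrite e_sym.
rewrite inE (height_nbr3 hu euc) eqxx /=; apply/existsP; exists u.
by rewrite e_sym euc hu dc !eqxx uz uz'.
Qed.

Let S := [set x; y] :|: S1.

Let SP s : s \in S -> [\/ s = x, s = y | s \in S1].
Proof. by rewrite !inE => /orP[/orP[]/eqP|]; [constructor 1|constructor 2|constructor 3]. Qed.

Let x_notin_S1 : x \notin S1. Proof. by apply/negP => /S1_dist; rewrite dx. Qed.

Let nbr1_a t c : t = x \/ t = y -> e t c -> h c = 1 -> c = a.
Proof.
move=> txy etc hc; case: txy => ->  in etc *.
  by apply: (level2_nbr1_uniq hx etc); rewrite 1?e_sym.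
by apply: (level2_nbr1_uniq hy etc); rewrite 1?e_sym.
Qed.

Let S_dom : dom3 S.
Proof.
apply/dom3P => u hu; case: (eqVneq u z) => [->|uz]; first by exists x; rewrite // !inE eqxx.
case: (eqVneq u z') => [->|uz']; first by exists y; rewrite // !inE eqxx orbT.
by have [s sS1 esu] := S1_dom hu uz uz'; exists s; rewrite // inE sS1 orbT.
Qed.

Let y_not_z : ~~ e y z.
Proof.
apply/negP => eyz; have ezx : e z x by rewrite e_sym.
have ezy : e z y by rewrite e_sym.
by move: xy; rewrite (parent_uniq_a ezx ezy) ?dx ?dy ?dz ?eqxx.
Qed.

Let x_not_z' : ~~ e x z'.
Proof.
apply/negP => exz'; have ez'x : e z' x by rewrite e_sym.
have ez'y : e z' y by rewrite e_sym.
by move: xy; rewrite (parent_uniq_a ez'x ez'y) ?dx ?dy ?dz' ?eqxx.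
Qed.

Let S_priv : has_privates S.
Proof.
move=> s /SP[->|->|sS1].
- exists z; split=> //; first by right.
  by move=> s' /SP[//|->|/S1_not_z]; [rewrite (negbTE y_not_z)|move=> /[apply]; case; left].
- exists z'; split=> //; first by right.
  by move=> s' /SP[->|//|/S1_not_z]; [rewrite (negbTE x_not_z')|move=> /[apply]; case; right].
have [hs _] := S1P sS1; have [|c [esc hc]] := bt_desc B (v := s); first by rewrite hs.
have {}hc : h c = 1 by rewrite hs in hc; case: hc.
have hc3 : h c != 3 by rewrite hc.
have dc := S1_child sS1 esc hc3.
exists c; split=> //; first by left.
move=> s' /SP[s'E|s'E|s'S1] es'c.
- by move: dc; rewrite (nbr1_a (or_introl s'E) es'c hc) dist_root.
- by move: dc; rewrite (nbr1_a (or_intror s'E) es'c hc) dist_root.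
- apply: parent_uniq_a (_ : e c s') (_ : e c s) _ _; rewrite 1?e_sym //.
  by rewrite -(S1_child s'S1 es'c hc3) dc.
Qed.

Let S2 : S \subset level 2.
Proof. by apply/subsetP => s /SP[->|->|/S1P[hs _]]; rewrite inE ?hx ?hy ?hs. Qed.

Let S' := w |: (S :\ x).

Let S1_sub_S' : S1 \subset S'.
Proof.
apply/subsetP => s sS1; rewrite in_setU1 in_setD1 in_setU sS1 orbT andbT (_ : s != x) ?orbT //.
by apply: contraNneq x_notin_S1 => <-.
Qed.

Let y_in_S' : y \in S'.
Proof. by rewrite in_setU1 in_setD1 in_setU in_set2 eqxx (eq_sym y x) xy !orbT. Qed.

Let S'_dom : dom3 S'.
Proof.
apply/dom3P => u hu; case: (eqVneq u z) => [->|uz]; first by exists w; rewrite ?setU11 // e_sym.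
case: (eqVneq u z') => [->|uz']; first by exists y.
by have [s sS1 esu] := S1_dom hu uz uz'; exists s; rewrite ?(subsetP S1_sub_S').
Qed.

Let b_notin_NS : b \notin nbhd e S.
Proof.
have hb3 : h b != 3 by rewrite hb.
apply/nbhdP => -[t /SP[tE|tE|tS1] etb].
- by have := db; rewrite (nbr1_a (or_introl tE) etb hb) dist_root.
- by have := db; rewrite (nbr1_a (or_intror tE) etb hb) dist_root.
have ebw : e b w by rewrite e_sym.
have ebt : e b t by rewrite e_sym.
have tw : t = w by apply: parent_uniq_a ebt ebw (esym (S1_child tS1 etb hb3)) _; rewrite dw db.
rewrite tw in tS1; have [_ [u [ewu hu du uz _]]] := S1P tS1.
have ewz : e w z by rewrite e_sym.
by move: uz; rewrite (parent_uniq_a ewu ewz du (_ : _ = d w)) ?eqxx // dz dw.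
Qed.

Let N_S'_sub : level 1 :\: nbhd e S' \subset (level 1 :\: nbhd e S) :\ b.
Proof.
apply/subsetP => q; rewrite in_setD => /andP[qNS' q1]; rewrite in_setD1 in_setD q1 andbT.
apply/andP; split; first by apply: contraNneq qNS' => ->; apply/nbhdP; exists w; rewrite ?setU11.
apply/nbhdP => -[t tS etq]; case/negP: qNS'; apply/nbhdP.
case: (eqVneq t x) => [tx|tx]; last by exists t; rewrite // in_setU1 in_setD1 tx tS orbT.
rewrite inE in q1; rewrite (nbr1_a (or_introl tx) etq (eqP q1)).
by exists y; rewrite // e_sym.
Qed.

Lemma two_level2_nbrs_false : False.
Proof.
have bN : b \in level 1 :\: nbhd e S by rewrite in_setD b_notin_NS inE hb.
have xS : x \in S by rewrite !inE eqxx.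
have card_S' : #|S'| <= #|S| by rewrite cardsU1 (cardsD1 x S) xS leq_add2r leq_b1.
have lt_cost : td_cost S' < td_cost S.
  rewrite /td_cost (cardsD1 b (level 1 :\: nbhd e S)) bN add1n addnS ltnS.
  exact: leq_add card_S' (subset_leq_card N_S'_sub).
by have := unmixed_td_cost_min S2 S_dom S_priv S'_dom; rewrite leqNgt lt_cost.
Qed.

End Level1Matched.

Lemma level1_nbr2_uniq a x y : h a = 1 -> e a x -> e a y -> h x = 2 -> h y = 2 -> x = y.
Proof.
move=> ha eax eay hx hy; apply/eqP/negPn/negP => xy.
pose conn u : connect e a u := bt_conn B a u.
have d_nbr t : e a t -> dist conn t = 1.
  by move=> eat; case: (dist_edge e_sym e_irr e_acyc conn eat); rewrite dist_root.
have up t : e a t -> h t = 2 -> exists2 z, e t z & h z = 3 /\ dist conn z = 2.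
  move=> eat ht; have eta : e t a by rewrite e_sym.
  have [|z etz za] := other_nbr (v := t) _ eta; first by rewrite ht.
  have dat : (dist conn a).+1 = dist conn t by rewrite dist_root d_nbr.
  exists z => //; split; last by rewrite (dist_child e_sym e_irr e_acyc eta dat etz za) d_nbr.
  case: (bt_edge B etz); rewrite ht // => -[hz].
  by rewrite (level2_nbr1_uniq ht etz eta (esym hz) ha) eqxx in za.
have [z exz [hz dz]] := up x eax hx; have [z' eyz' [hz' dz']] := up y eay hy.
have ezx : e z x by rewrite e_sym.
have [|w ezw wx] := other_nbr (v := z) _ ezx; first by rewrite hz.
have hw := height_nbr3 hz ezw.
have dxz : (dist conn x).+1 = dist conn z by rewrite dz d_nbr.
have dw := dist_child e_sym e_irr e_acyc ezx dxz ezw wx; rewrite dz in dw.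
have [|b [ewb hb]] := bt_desc B (v := w); first by rewrite hw.
rewrite hw in hb; case: hb => hb.
have bz : b != z by apply/eqP => bz; rewrite bz hz in hb.
have ewz : e w z by rewrite e_sym.
have dzw : (dist conn z).+1 = dist conn w by rewrite dz dw.
have db := dist_child e_sym e_irr e_acyc ewz dzw ewb bz; rewrite dw in db.
exact: (two_level2_nbrs_false ha hz hz' hb eax eay exz eyz' ezw ewb xy
  (d_nbr x eax) (d_nbr y eay) dz dz' dw db).
Qed.

End Unmixed.
End BalancedTree3.

(* Unmixedness enters the induction only through this property, which, unlike
   unmixedness itself, survives the removal of the pendant paths used below. *)
Record matched_tree3 (V : finType) (e : rel V) : Prop := MatchedTree3 {
  mt_bal : balanced_tree3 e;
  mt_nbr12_uniq : forall v u1 u2, height e v = 1 -> e v u1 -> e v u2 ->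
    height e u1 = 2 -> height e u2 = 2 -> u1 = u2;
  mt_nbr21_uniq : forall v u1 u2, height e v = 2 -> e v u1 -> e v u2 ->
    height e u1 = 1 -> height e u2 = 1 -> u1 = u2 }.

Lemma matched_tree3_of_unmixed (V : finType) (e : rel V) :
  balanced_tree3 e -> unmixed e -> matched_tree3 e.
Proof.
move=> B um; split=> // [v u1 u2|v u1 u2]; first exact: level1_nbr2_uniq.
exact: level2_nbr1_uniq.
Qed.

Lemma isomorphic_sym (A B : finType) (e1 : rel A) (e2 : rel B) :
  isomorphic e1 e2 -> isomorphic e2 e1.
Proof.
move=> [f [[g fK gK] fE]]; exists g; split; first by exists f.
by move=> x y; rewrite fE !gK.
Qed.

Lemma isomorphic_trans (A B C : finType) (e1 : rel A) (e2 : rel B) (e3 : rel C) :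
  isomorphic e1 e2 -> isomorphic e2 e3 -> isomorphic e1 e3.
Proof.
move=> [f [bf fE]] [g [bg gE]]; exists (g \o f); split; first exact: bij_comp.
by move=> x y; rewrite fE gE.
Qed.

Lemma isomorphic_attach (A B : finType) (e1 : rel A) (e2 : rel B) (f : A -> B) v k (a : 'I_k) :
  bijective f -> (forall x y, e1 x y = e2 (f x) (f y)) ->
  isomorphic (attach e1 v a) (attach e2 (f v) a).
Proof.
move=> bf fE; have f_inj := bij_inj bf; have [g fK gK] := bf.
exists (fun p => match p with inl x => inl (f x) | inr i => inr i end); split.
  exists (fun p => match p with inl x => inl (g x) | inr i => inr i end).
    by case=> [x|i] //=; rewrite fK.
  by case=> [x|i] //=; rewrite gK.
by case=> [x|i] [y|j] //=; rewrite ?(inj_eq f_inj).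
Qed.

(** * Removing a pendant path *)

Lemma acyclic_relpre (A B : finType) (f : A -> B) (e : rel B) :
  injective f -> acyclic e -> acyclic (relpre f e).
Proof.
move=> f_inj acyc c uc sc; rewrite -cycle_map.
by apply: acyc; rewrite ?map_inj_uniq ?size_map.
Qed.

Section PendantPath.
Variables (V : finType) (e : rel V).
Hypothesis M : matched_tree3 e.
Local Notation h := (height e).
Let B := mt_bal M.
Let e_sym := bt_sym B.

(* Deleting the path g hanging from v keeps all heights, since v keeps two
   neighbours, one of them lower than v, and some vertex of height 3 remains. *)
Variables (v : V) (k : nat) (a : 'I_k) (g : 'I_k -> V).
Hypothesis hg : forall i, h (g i) = i.
Hypothesis g_edge : forall i j : 'I_k, i.+1 = j -> e (g i) (g j).
Hypothesis v_ga : e v (g a).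
Hypothesis g_closed : forall x i, e x (g i) -> (exists j, x = g j) \/ (x = v /\ i = a).
Hypothesis v_off_path : forall i, v != g i.
Hypothesis v_two_nbrs : exists b1 b2,
  [/\ b1 != b2, e v b1, e v b2, (forall i, b1 != g i) & (forall i, b2 != g i)].
Hypothesis v_desc : exists2 u, (forall i, u != g i) & e v u /\ (h u).+1 = h v.
Hypothesis v3 : exists2 w, (forall i, w != g i) & h w = 3.

Let R := [set g i | i in 'I_k].

Let in_R x : reflect (exists i, x = g i) (x \in R).
Proof. by apply: (iffP imsetP) => [[i _ ->]|[i ->]]; exists i. Qed.

Let notin_R x : (forall i, x != g i) -> x \notin R.
Proof. by move=> xg; apply/negP => /in_R[i /eqP]; rewrite (negbTE (xg i)). Qed.

Let nbr_notin_R x y : x \notin R -> x != v -> e x y -> y \notin R.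
Proof.
move=> xR xv exy; apply/negP => /in_R[i yE]; rewrite yE in exy.
case: (g_closed exy) => [[j xE]|[xE _]]; last by rewrite xE eqxx in xv.
by case/negP: xR; apply/in_R; exists j.
Qed.

Let g_inj : injective g.
Proof. by move=> i j gE; apply: val_inj; rewrite /= -(hg i) -(hg j) gE. Qed.

Let W : finType := {x : V | x \notin R}.
Let eW : rel W := relpre val e.
Let v_notin_R : v \notin R.
Proof. exact: notin_R. Qed.

Let vW : W := exist _ v v_notin_R.

Let card_W : #|W| + k = #|V|.
Proof.
rewrite card_sig -(cardsC R) addnC card_imset ?card_ord //.
by congr (_ + _); apply: eq_card => x; rewrite !inE.
Qed.

Let W_connect_v (p : W) : connect eW p vW.
Proof.
pose conn u : connect e v u := bt_conn B v u.
move: {2}(dist conn (val p)) (leqnn (dist conn (val p))) => n.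
elim: n p => [|n IH] p dp; case: (eqVneq (val p) v) => [pv|pv].
- by rewrite (_ : p = vW) //; apply: val_inj.
- by move: dp; rewrite leqn0 => /eqP/(dist_eq0 (conn := conn)) pE; rewrite pE eqxx in pv.
- by rewrite (_ : p = vW) //; apply: val_inj.
have [q [epq dq]] := exists_parent e_sym conn pv.
apply: (connect_trans (connect1 (_ : eW p (exist _ q (nbr_notin_R (valP p) pv epq))))) => //.
by apply: IH; rewrite /= -ltnS dq.
Qed.

Let W_connected : connected_graph eW.
Proof.
move=> p q; apply: connect_trans (W_connect_v p) _.
by rewrite (sym_connect_sym (fun p q => e_sym (val p) (val q))); apply: W_connect_v.
Qed.

Let W_nbrs (p : W) : #|[set q | eW p q]| = #|[set y | e (val p) y & y \notin R]|.
Proof.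
rewrite -(card_imset _ val_inj); apply: eq_card => y; rewrite [in RHS]inE.
apply/imsetP/andP => [[q]|[epy yR]]; first by rewrite inE => epq ->; split=> //; exact: (valP q).
by exists (exist _ y yR); rewrite // inE.
Qed.

Let W_deg (p : W) : val p != v -> deg eW p = deg e (val p).
Proof.
move=> pv; rewrite /deg W_nbrs; apply: eq_card => y; rewrite !inE.
by case epy: (e (val p) y); rewrite //= (nbr_notin_R (valP p) pv epy).
Qed.

Let vW_deg : 1 < deg eW vW.
Proof.
have [b1 [b2 [b12 eb1 eb2 b1g b2g]]] := v_two_nbrs.
rewrite /deg W_nbrs; apply: (@leq_trans #|[set b1; b2]|); first by rewrite cards2 b12.
apply/subset_leq_card/subsetP => y; rewrite !inE => /orP[]/eqP->.
  by rewrite eb1 notin_R.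
by rewrite eb2 notin_R.
Qed.

Let W_has_nbr (p : W) : exists q, eW p q.
Proof.
case: (eqVneq (val p) v) => [pv|pv].
  have [b1 [_ [_ eb1 _ b1g _]]] := v_two_nbrs.
  by exists (exist _ b1 (notin_R b1g)); rewrite /eW /= pv.
have [y py] := exists_nbr B (val p).
by exists (exist _ y (nbr_notin_R (valP p) pv py)).
Qed.

Let W_desc (p : W) : 0 < h (val p) -> exists q, eW p q /\ (h (val q)).+1 = h (val p).
Proof.
case: (eqVneq (val p) v) => [pv|pv] hp.
  have [u ug [evu hu]] := v_desc.
  by exists (exist _ u (notin_R ug)); rewrite /eW /= pv.
have [y [py hy]] := bt_desc B hp.
by exists (exist _ y (nbr_notin_R (valP p) pv py)).
Qed.

Let W_height (p : W) : height eW p = h (val p).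
Proof.
apply: (height_char W_has_nbr _ W_desc) => {p}.
- move=> p; case: (eqVneq (val p) v) => [pv|pv]; last first.
    by rewrite /is_leaf W_deg // -/(is_leaf e (val p)) (leafE B); split=> /eqP.
  have -> : p = vW by apply: val_inj.
  have [u _ [_ hu]] := v_desc; split=> [hv0|/eqP dv]; first by rewrite /= hv0 in hu.
  by have := vW_deg; rewrite dv.
- by move=> p q epq; case: (bt_edge B epq) => ->; rewrite ?leqnSn // -addn2 leq_addr.
Qed.

Let W_matched : matched_tree3 eW.
Proof.
have hW := W_height.
split; first split.
- by move=> p q; apply: e_sym.
- by move=> p; apply: (bt_irr B).
- exact: acyclic_relpre val_inj (bt_acyc B).
- exact: W_connected.
- by move=> p; rewrite hW; apply: (bt_le3 B).
- by move=> p q epq; rewrite !hW; apply: (bt_edge B epq).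
- move=> p; rewrite hW => hp; case: (eqVneq (val p) v) => [pv|pv].
    by have [u _ [_]] := v_desc; rewrite -pv hp.
  by rewrite /is_leaf W_deg // -/(is_leaf e (val p)) (leafE B) hp.
- by move=> p; rewrite !hW => /W_desc[q [epq hq]]; exists q; rewrite hW.
- by have [w wg hw] := v3; exists (exist _ w (notin_R wg)); rewrite hW.
- move=> p q1 q2; rewrite !hW => hp e1 e2 h1 h2; apply: val_inj.
  exact: (mt_nbr12_uniq M hp e1 e2 h1 h2).
- move=> p q1 q2; rewrite !hW => hp e1 e2 h1 h2; apply: val_inj.
  exact: (mt_nbr21_uniq M hp e1 e2 h1 h2).
Qed.

Let glue (p : W + 'I_k) : V := match p with inl q => val q | inr i => g i end.

Let glue_bij : bijective glue.
Proof.
apply: inj_card_bij; last by rewrite card_sum card_ord card_W.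
case=> [p|i] [q|j] //= pqE.
- by congr inl; apply: val_inj.
- by case/negP: (valP p); apply/in_R; exists j.
- by case/negP: (valP q); apply/in_R; exists i.
- by congr inr; apply: g_inj.
Qed.

Let glue_edge p q : attach eW vW a p q = e (glue p) (glue q).
Proof.
have vW_eq (r : W) : (r == vW) = (val r == v) by rewrite -val_eqE.
case: p => [p|i]; case: q => [q|j] //=.
- rewrite vW_eq; apply/idP/idP => [/andP[/eqP -> /eqP ->] //|epj].
  case: (g_closed epj) => [[j' pE]|[pv ja]]; last by apply/andP; split; apply/eqP.
  by case/negP: (valP p); apply/in_R; exists j'.
- rewrite vW_eq e_sym; apply/idP/idP => [/andP[/eqP -> /eqP ->] //|eqi].
  case: (g_closed eqi) => [[j' qE]|[qv ia]]; last by apply/andP; split; apply/eqP.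
  by case/negP: (valP q); apply/in_R; exists j'.
- rewrite /path_rel; apply/idP/idP => [/orP[]/eqP ij|eij]; first exact: g_edge.
    by rewrite e_sym; apply: g_edge.
  by case: (bt_edge B eij); rewrite !hg => ->; rewrite eqxx ?orbT.
Qed.

Lemma pendant_path_removal : exists (W : finType) (e' : rel W) (v' : W),
  [/\ matched_tree3 e', #|W| < #|V|, height e' v' = h v & isomorphic e (attach e' v' a)].
Proof.
exists W, eW, vW; split.
- exact: W_matched.
- by rewrite -card_W -addn1 leq_add2l; case: (k) a => [[]|].
- exact: W_height.
- by apply: isomorphic_sym; exists glue; split; [apply: glue_bij|apply: glue_edge].
Qed.

End PendantPath.

(** * Induction on the number of vertices *)

Definition O_reachable (V : finType) (e : rel V) :=
  exists (W : finType) (e' : rel W), O_reach e' /\ isomorphic e e'.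

Lemma O_reachable_attach (V W : finType) (e : rel V) (e0 : rel W) v0 k (a : 'I_k) :
  (forall (U : finType) (e1 : rel U) x,
     O_reach e1 -> height e1 x = height e0 v0 -> O_reach (attach e1 x a)) ->
  O_reachable e0 -> isomorphic e (attach e0 v0 a) -> O_reachable e.
Proof.
move=> O_step [W1 [e1 [O1 [f [bf fE]]]]] iso0.
exists _, (attach e1 (f v0) a); split; first by apply: O_step => //; rewrite -(height_iso bf fE).
exact: isomorphic_trans iso0 (isomorphic_attach _ _ bf fE).
Qed.

Lemma isomorphic_path_rel (V : finType) (e : rel V) k (g : 'I_k.+1 -> V) :
  symmetric e -> connected_graph e -> injective g ->
  (forall i j : 'I_k.+1, i.+1 = j -> e (g i) (g j)) ->
  (forall i t, e (g i) t -> exists2 j, t = g j & path_rel i j) ->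
  isomorphic e (@path_rel k.+1).
Proof.
move=> e_sym conn g_inj g_edge g_nbrs.
have g_onto : codom g =i predT.
  have closed_img u w : u \in [set x in codom g] -> e u w -> w \in [set x in codom g].
    by rewrite !inE => /codomP[i ->] /g_nbrs[j -> _]; apply: codom_f.
  have := connected_closed conn (_ : g ord0 \in [set x in codom g]) closed_img.
  by rewrite inE codom_f => /(_ isT) codomT u; rewrite -[u \in _]inE codomT inE.
have g_bij : bijective g.
  apply: (inj_card_bij g_inj); rewrite -(card_codom g_inj).
  by apply/subset_leq_card/subsetP => u; rewrite g_onto.
apply: isomorphic_sym; exists g; split=> // i j.
apply/idP/idP => [/orP[]/eqP ij|/g_nbrs[j' /g_inj -> //]].
  exact: g_edge.
by rewrite e_sym; apply: g_edge.
Qed.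

Definition level1_one_leaf (V : finType) (e : rel V) := forall s l1 l2,
  height e s = 1 -> e s l1 -> e s l2 -> height e l1 = 0 -> height e l2 = 0 -> l1 = l2.

Section InductionStep.
Variable n : nat.
Hypothesis IH : forall (V : finType) (e : rel V), #|V| <= n -> matched_tree3 e -> O_reachable e.
Variables (V : finType) (e : rel V).
Hypotheses (M : matched_tree3 e) (card_V : #|V| <= n.+1).
Local Notation h := (height e).
Let B := mt_bal M.
Let e_sym := bt_sym B.
Let e_irr := bt_irr B.
Let e_acyc := bt_acyc B.

Let neq_h u w : h u != h w -> u != w.
Proof. by apply: contra_neq => ->. Qed.

Let O_reachable_removal v k (a : 'I_k) :
  (forall (U : finType) (e1 : rel U) x,
     O_reach e1 -> height e1 x = h v -> O_reach (attach e1 x a)) ->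
  (exists (W : finType) (e' : rel W) (v' : W),
    [/\ matched_tree3 e', #|W| < #|V|, height e' v' = h v & isomorphic e (attach e' v' a)]) ->
  O_reachable e.
Proof.
move=> O_step [W [e' [v' [M' ltW hv' iso]]]]; rewrite -hv' in O_step.
apply: (O_reachable_attach O_step (@IH W e' _ M') iso).
by rewrite -ltnS (leq_trans ltW card_V).
Qed.

Lemma two_leaves_reachable s l1 l2 :
  h s = 1 -> e s l1 -> e s l2 -> l1 != l2 -> h l1 = 0 -> h l2 = 0 -> O_reachable e.
Proof.
move=> hs esl1 esl2 l12 hl1 hl2.
have [x [esx hx]] := height1_nbr2 B hs.
have [w hw] := bt_ex3 B.
apply: (O_reachable_removal (v := s) (a := Ordinal (isT : 0 < 1))).
  by move=> U e1 y Oe1; rewrite hs; apply: OR_h1.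
apply: (pendant_path_removal M (g := fun _ => l1)) => //.
- by case=> -[].
- by case=> -[|] // ? [] -[].
- move=> z i ezl; right; split; last by apply: val_inj; case: i => -[].
  by apply: (leaf_nbr_uniq (_ : is_leaf e l1)); rewrite ?(leafE B) ?hl1 // e_sym.
- by move=> _; apply: neq_h; rewrite hs hl1.
- exists l2, x; split=> //; first by apply: neq_h; rewrite hl2 hx.
    by move=> _; rewrite eq_sym.
  by move=> _; apply: neq_h; rewrite hl1 hx.
- by exists l2; [move=> _; rewrite eq_sym|rewrite hl2 hs].
- by exists w; [move=> _; apply: neq_h; rewrite hw hl1|].
Qed.

Let notin_nth (p : seq V) u x0 : u \notin p -> forall i : 'I_(size p), u != nth x0 p i.
Proof. by move=> up i; apply: contraNneq up => ->; rewrite mem_nth. Qed.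

Section FarPath.
Variables m s x y : V.
Hypotheses (hm : h m = 0) (hs : h s = 1) (hx : h x = 2) (hy : h y = 3).
Hypotheses (ems : e m s) (esx : e s x) (exy : e x y).
Hypothesis Nm : forall t, e m t -> t = s.
Hypothesis Ns : forall t, e s t -> t = m \/ t = x.
Hypothesis Nx : forall t, e x t -> t = s \/ t = y.

Lemma far_path_O3_reachable x' x'' :
  e y x' -> e y x'' -> x' != x -> x'' != x -> x' != x'' -> O_reachable e.
Proof.
move=> eyx' eyx'' x'x x''x x'x''.
have hx' := height_nbr3 B hy eyx'; have hx'' := height_nbr3 B hy eyx''.
have x'_off : x' \notin [:: m; s; x] by rewrite !inE !negb_or x'x !neq_h ?hx' ?hm ?hs.
have x''_off : x'' \notin [:: m; s; x] by rewrite !inE !negb_or x''x !neq_h ?hx'' ?hm ?hs.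
have y_off : y \notin [:: m; s; x] by rewrite !inE !negb_or !neq_h ?hy ?hm ?hs ?hx.
apply: (O_reachable_removal (v := y) (a := Ordinal (isT : 2 < 3))).
  by move=> U e1 z Oe1; rewrite hy; apply: OR_h3.
apply: (pendant_path_removal M (g := nth m [:: m; s; x])).
- by case=> -[|[|[|]]].
- by case=> -[|[|[|]]] // ? [] -[|[|[|]]] // ? [] //= _; rewrite e_sym.
- by rewrite /= e_sym.
- move=> z [[|[|[|i]]] lt_i] //= ez.
  + by left; exists (Ordinal (isT : 1 < 3)); apply: Nm; rewrite e_sym.
  + have : e s z by rewrite e_sym.
    by case/Ns => ->; left; [exists (Ordinal (isT : 0 < 3))|exists (Ordinal (isT : 2 < 3))].
  + have : e x z by rewrite e_sym.
    case/Nx => ->; first by left; exists (Ordinal (isT : 1 < 3)).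
    by right; split=> //; apply: val_inj.
- exact: notin_nth y_off.
- by exists x', x''; split=> //; [exact: notin_nth x'_off|exact: notin_nth x''_off].
- by exists x'; [exact: notin_nth x'_off|rewrite hx' hy].
- by exists y; first exact: notin_nth y_off.
Qed.

Lemma far_path_O2_reachable x' y' : e y x' -> x' != x -> (forall t, e y t -> t = x \/ t = x') ->
  e x' y' -> y' != y -> h y' = 3 -> O_reachable e.
Proof.
move=> eyx' x'x Ny ex'y' y'y hy'.
have hx' := height_nbr3 B hy eyx'.
have [|s' [ex's' hs']] := bt_desc B (v := x'); first by rewrite hx'.
rewrite hx' in hs'; case: hs' => hs'.
have s's : s' != s.
  apply/eqP => s'E; have : e s x' by rewrite -s'E e_sym.
  by case/Ns => x'E; [rewrite x'E hm in hx'|rewrite x'E eqxx in x'x].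
have x'_off : x' \notin [:: m; s; x; y] by rewrite !inE !negb_or x'x !neq_h ?hx' ?hm ?hs ?hy.
have s'_off : s' \notin [:: m; s; x; y] by rewrite !inE !negb_or s's !neq_h ?hs' ?hm ?hx ?hy.
have y'_off : y' \notin [:: m; s; x; y] by rewrite !inE !negb_or y'y !neq_h ?hy' ?hm ?hs ?hx.
apply: (O_reachable_removal (v := x') (a := Ordinal (isT : 3 < 4))).
  by move=> U e1 z Oe1; rewrite hx'; apply: OR_h2.
apply: (pendant_path_removal M (g := nth m [:: m; s; x; y])).
- by case=> -[|[|[|[|]]]].
- by case=> -[|[|[|[|]]]] // ? [] -[|[|[|[|]]]] // ? [] //= _; rewrite e_sym.
- by rewrite /= e_sym.
- move=> z [[|[|[|[|i]]]] lt_i] //= ez.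
  + by left; exists (Ordinal (isT : 1 < 4)); apply: Nm; rewrite e_sym.
  + have : e s z by rewrite e_sym.
    by case/Ns => ->; left; [exists (Ordinal (isT : 0 < 4))|exists (Ordinal (isT : 2 < 4))].
  + have : e x z by rewrite e_sym.
    by case/Nx => ->; left; [exists (Ordinal (isT : 1 < 4))|exists (Ordinal (isT : 3 < 4))].
  + have : e y z by rewrite e_sym.
    case/Ny => ->; first by left; exists (Ordinal (isT : 2 < 4)).
    by right; split=> //; apply: val_inj.
- exact: notin_nth x'_off.
- exists s', y'; split=> //; [|exact: notin_nth s'_off|exact: notin_nth y'_off].
  by rewrite neq_h ?hs' ?hy'.
- by exists s'; [exact: notin_nth s'_off|rewrite hs' hx'].
- by exists y'; first exact: notin_nth y'_off.
Qed.

Lemma far_path_P6 x' : e y x' -> x' != x -> (forall t, e y t -> t = x \/ t = x') ->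
  (forall t, e x' t -> h t = 3 -> t = y) ->
  level1_one_leaf e ->
  isomorphic e P6.
Proof.
move=> eyx' x'x Ny Nx'3 one_leaf.
have hx' := height_nbr3 B hy eyx'.
have [|s' [ex's' hs']] := bt_desc B (v := x'); first by rewrite hx'.
rewrite hx' in hs'; case: hs' => hs'.
have [|m' [es'm' hm']] := bt_desc B (v := s'); first by rewrite hs'.
rewrite hs' in hm'; case: hm' => hm'.
have Nx' t : e x' t -> t = s' \/ t = y.
  move=> ex't; case: (bt_edge B ex't); rewrite hx' => -[ht].
    by left; apply: (mt_nbr21_uniq M hx' ex't ex's').
  by right; apply: Nx'3.
have es'x' : e s' x' by rewrite e_sym.
have Ns' t : e s' t -> t = m' \/ t = x'.
  move=> es't; case: (bt_edge B es't); rewrite hs' => -[ht].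
    by left; apply: (one_leaf s' t m').
  by right; apply: (mt_nbr12_uniq M hs' es't es'x').
have Nm' t : e m' t -> t = s'.
  have lm' : is_leaf e m' by rewrite (leafE B) hm'.
  by move=> em't; apply: (leaf_nbr_uniq lm' em't); rewrite e_sym.
have s's : s' != s.
  apply/eqP => s'E; have : e s x' by rewrite -s'E e_sym.
  by case/Ns => x'E; [rewrite x'E hm in hx'|rewrite x'E eqxx in x'x].
have m'm : m' != m by apply: contra_neq s's => m'E; apply: Nm; rewrite -m'E e_sym.
pose p := [:: m; s; x; y; x'; s'; m'].
have p_uniq : uniq p.
  rewrite /= !inE !negb_or !(eq_sym _ m') !(eq_sym _ s') !(eq_sym _ x') m'm s's x'x.
  by rewrite !neq_h ?hm ?hs ?hx ?hy ?hx' ?hs' ?hm'.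
apply: (isomorphic_path_rel (g := nth m p) e_sym (bt_conn B)).
- move=> i j /eqP; rewrite (@nth_uniq _ m p i j (ltn_ord i) (ltn_ord j) p_uniq).
  by move/eqP; apply: val_inj.
- by case=> -[|[|[|[|[|[|[|]]]]]]] // ? [] -[|[|[|[|[|[|[|]]]]]]] // ? [] //= _; rewrite e_sym.
- case=> -[|[|[|[|[|[|[|i]]]]]]] // lt_i t /=.
  + by move/Nm => ->; exists (Ordinal (isT : 1 < 7)).
  + by case/Ns => ->; [exists (Ordinal (isT : 0 < 7))|exists (Ordinal (isT : 2 < 7))].
  + by case/Nx => ->; [exists (Ordinal (isT : 1 < 7))|exists (Ordinal (isT : 3 < 7))].
  + by case/Ny => ->; [exists (Ordinal (isT : 2 < 7))|exists (Ordinal (isT : 4 < 7))].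
  + by case/Nx' => ->; [exists (Ordinal (isT : 5 < 7))|exists (Ordinal (isT : 3 < 7))].
  + by case/Ns' => ->; [exists (Ordinal (isT : 6 < 7))|exists (Ordinal (isT : 4 < 7))].
  + by move/Nm' => ->; exists (Ordinal (isT : 5 < 7)).
Qed.

Lemma far_path_reachable :
  level1_one_leaf e ->
  O_reachable e.
Proof.
move=> one_leaf; have eyx : e y x by rewrite e_sym.
have [|x' eyx' x'x] := other_nbr B (v := y) _ eyx; first by rewrite hy.
case: (pickP [pred t | [&& e y t, t != x & t != x']]) => [x'' /and3P[eyx'' x''x x''x']|no_x''].
  by apply: (far_path_O3_reachable eyx' eyx'') => //; rewrite eq_sym.
have Ny t : e y t -> t = x \/ t = x'.
  move=> eyt; have := no_x'' t; rewrite /= eyt.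
  by case: (eqVneq t x) => [|_ /= /eqP]; [left|right].
case: (pickP [pred t | [&& e x' t, t != y & h t == 3]]) => [y' /and3P[ex'y' y'y /eqP hy']|no_y'].
  exact: (far_path_O2_reachable eyx' x'x Ny ex'y' y'y hy').
exists _, P6; split; first exact: OR_base.
apply: (far_path_P6 eyx' x'x Ny _ one_leaf) => t ex't ht.
by apply/eqP; have := no_y' t; rewrite /= ex't ht eqxx andbT => /negbFE.
Qed.

End FarPath.

Let height3_descendant r (conn : forall u, connect e r u) p t :
  e t p -> (dist conn p).+1 = dist conn t -> h t = 3 ->
  exists q, dist conn q = (dist conn t).+2.
Proof.
move=> etp dp ht; have [|c etc cp] := other_nbr B (v := t) _ etp; first by rewrite ht.
have dc := dist_child e_sym e_irr e_acyc etp dp etc cp.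
have hc := height_nbr3 B ht etc.
have [|q [ecq hq]] := bt_desc B (v := c); first by rewrite hc.
have ect : e c t by rewrite e_sym.
have qt : q != t by apply: neq_h; rewrite ht; move: hq; rewrite hc => -[->].
by exists q; rewrite (dist_child e_sym e_irr e_acyc ect (esym dc) ecq qt) dc.
Qed.

Lemma no_two_leaves_reachable :
  level1_one_leaf e ->
  O_reachable e.
Proof.
move=> one_leaf; have [r hr] := bt_ex3 B.
pose conn u : connect e r u := bt_conn B r u.
have [q erq] := exists_nbr B r.
have [m mr m_max] := exists_farthest e_irr conn (ex_intro _ q erq).
have lm := farthest_leaf e_sym e_irr e_acyc mr m_max; have hm := leaf_height0 lm.
have [s [ems dsm]] := exists_parent e_sym conn mr.
have hs : h s = 1 by case: (bt_edge B ems); rewrite hm.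
have Nm t : e m t -> t = s by move=> emt; apply: leaf_nbr_uniq lm emt ems.
have [|x [esx dxs]] := exists_parent e_sym conn (u := s); first by apply: neq_h; rewrite hs hr.
have esm : e s m by rewrite e_sym.
have hx : h x = 2.
  case: (bt_edge B esx); rewrite hs => -[hx] //.
  by move: dxs dsm; rewrite (one_leaf s x m hs esx esm (esym hx) hm); lia.
have [|y [exy dyx]] := exists_parent e_sym conn (u := x); first by apply: neq_h; rewrite hx hr.
have exs : e x s by rewrite e_sym.
have hy : h y = 3.
  case: (bt_edge B exy); rewrite hx => -[hy] //.
  by move: dyx dxs; rewrite (mt_nbr21_uniq M hx exy exs (esym hy) hs); lia.
have Ns t : e s t -> t = m \/ t = x.
  move=> est; case: (bt_edge B est); rewrite hs => ht.
    by left; apply: (one_leaf s t m hs est esm _ hm); case: ht.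
  by right; apply: (mt_nbr12_uniq M hs est esx ht hx).
have Nx t : e x t -> t = s \/ t = y.
  move=> ext; case: (bt_edge B ext); rewrite hx => ht.
    by left; apply: (mt_nbr21_uniq M hx ext exs _ hs); case: ht.
  case: (eqVneq t y) => [->|ty]; [by right|exfalso].
  have dt := dist_child e_sym e_irr e_acyc exy dyx ext ty.
  have etx : e t x by rewrite e_sym.
  have [d dd] := height3_descendant etx (esym dt) ht.
  by have := m_max d; rewrite dd dt dxs dsm ltnn.
exact: (far_path_reachable hm hs hx hy ems esx exy Nm Ns Nx one_leaf).
Qed.

Lemma O_reachable_step : O_reachable e.
Proof.
case: (boolP [exists s, exists l1, exists l2,
    [&& h s == 1, e s l1, e s l2, l1 != l2 & (h l1 == 0) && (h l2 == 0)]]).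
  case/existsP=> s /existsP[l1 /existsP[l2 /and5P[/eqP hs esl1 esl2 l12 /andP[/eqP hl1 /eqP hl2]]]].
  exact: two_leaves_reachable hs esl1 esl2 l12 hl1 hl2.
move=> /existsPn no_two; apply: no_two_leaves_reachable => s l1 l2 hs esl1 esl2 hl1 hl2.
apply/eqP; move: (no_two s) => /existsPn/(_ l1)/existsPn/(_ l2).
by rewrite hs esl1 esl2 hl1 hl2 !eqxx !andbT negbK.
Qed.

End InductionStep.

Lemma matched_tree3_O_reachable (V : finType) (e : rel V) : matched_tree3 e -> O_reachable e.
Proof.
have [n] : exists n, #|V| <= n by exists #|V|.
elim: n V e => [|n IH] W e' card_W M.
  by have [v _] := bt_ex3 (mt_bal M); move: card_W; rewrite leqn0 => /eqP/card0_eq/(_ v).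
exact: (@O_reachable_step n IH W e' M card_W).
Qed.

Theorem theorem3p54 (T : finType) (e : rel T) :
  is_tree e -> unmixed e -> balanced e -> graph_height e = 3 ->
  isomorphic e P6 \/
  exists (V : finType) (e' : rel V), O_reach e' /\ isomorphic e e'.
Proof.
move=> tree um bal gh; right.
have B := balanced_tree3_of tree bal gh.
exact: matched_tree3_O_reachable (matched_tree3_of_unmixed B um).
Qed.
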